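(* Let $\alpha:\{0,1,2,\dots\}\times[0,\infty)\to[0,\infty)$ be nondecreasing (and locally Lipschitz-continuous) in its second argument. Let $(\beta_n)_{n\ge0}$ and $(g_n)_{n\ge0}$ be nonnegative sequences of real numbers, and let $(h_n)_{n\ge0}$, $(\gamma_n)_{n\ge0}$ be real sequences with $h_n>0$ and $0<h_n\gamma_n<1$, such that $$\frac{g_{n+1}-g_n}{h_n}\le -\gamma_n g_n+\alpha(n,g_n)+\beta_n,\qquad n\ge 0,$$ or, equivalently, $g_{n+1}\le g_n(1-h_n\gamma_n)+h_n\alpha(n,g_n)+h_n\beta_n$. If there is a sequence of positive numbers $(\mu_n)_{n\ge 0}$ such that $$\alpha\Big(n,\frac{1}{\mu_n}\Big)+\beta_n\le \frac{1}{\mu_n}\Big(\gamma_n-\frac{\mu_{n+1}-\mu_n}{\mu_n h_n}\Big)\quad\forall n\ge0,\qquad g_0\le \frac{1}{\mu_0},$$ then $$0\le g_n\le \frac{1}{\mu_n},\qquad \forall n\ge 0.$$ Therefore, if $\lim_{n\to\infty}\mu_n=\infty$, then $\lim_{n\to\infty}g_n=0$. *)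

From Stdlib Require Import Reals.
From Coquelicot Require Import Coquelicot.
Open Scope R_scope.

Definition nondecr_on_nonneg (f : R -> R) : Prop :=
  forall x y, 0 <= x -> x <= y -> f x <= f y.

Definition loc_lipschitz_on_nonneg (f : R -> R) : Prop :=
  forall x0, 0 <= x0 -> exists L delta, 0 < delta /\
    forall x y, 0 <= x -> 0 <= y -> Rabs (x - x0) < delta -> Rabs (y - x0) < delta ->
      Rabs (f x - f y) <= L * Rabs (x - y).

(* Multiplying the recursion by h_n,
   g_{n+1} <= g_n (1 - h_n gamma_n) + h_n (alpha(n, g_n) + beta_n); since
   1 - h_n gamma_n > 0 and alpha(n, .) is nondecreasing, the right-hand side is
   monotone in g_n, so g_n <= 1/mu_n and the hypothesis on mu give
   g_{n+1} <= 1/mu_n - (mu_{n+1} - mu_n)/mu_n^2, which is the tangent line of the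
   convex function 1/x at mu_n evaluated at mu_{n+1}, hence at most 1/mu_{n+1}. *)

From Stdlib Require Import Reals Lra.
From Coquelicot Require Import Coquelicot.
Open Scope R_scope.

Lemma inv_tangent_le (m m' : R) : 0 < m -> 0 < m' ->
  1 / m - (m' - m) / (m * m) <= 1 / m'.
Proof.
  intros Hm Hm'.
  assert (Egap : 1 / m' - (1 / m - (m' - m) / (m * m)) = (m' - m) ^ 2 / (m * m * m'))
    by (field; lra).
  assert (Hgap : 0 <= (m' - m) ^ 2 / (m * m * m')).
  { apply Rdiv_le_0_compat; [apply pow2_ge_0 | apply Rmult_lt_0_compat; nra]. }
  lra.
Qed.

Lemma explicit_step_le (x x' h gam a b : R) : 0 < h ->
  (x' - x) / h <= - gam * x + a + b -> x' <= x * (1 - h * gam) + h * (a + b).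
Proof.
  intros Hh Hrec.
  apply Rmult_le_compat_l with (r := h) in Hrec; [|lra].
  replace (h * ((x' - x) / h)) with (x' - x) in Hrec by (field; lra).
  lra.
Qed.

Lemma comparison_step (f : R -> R) (x x' h gam b m m' : R) :
  nondecr_on_nonneg f -> 0 <= x -> 0 < h -> h * gam < 1 -> 0 < m -> 0 < m' ->
  (x' - x) / h <= - gam * x + f x + b ->
  f (1 / m) + b <= (1 / m) * (gam - (m' - m) / (m * h)) ->
  x <= 1 / m -> x' <= 1 / m'.
Proof.
  intros Hf Hx Hh Hhg Hm Hm' Hrec Hcond Hxm.
  pose proof (explicit_step_le x x' h gam (f x) b Hh Hrec) as Hexp.
  assert (Hdecay : x * (1 - h * gam) <= 1 / m * (1 - h * gam))
    by (apply Rmult_le_compat_r; lra).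
  assert (Hsource : h * (f x + b) <= h * (1 / m * (gam - (m' - m) / (m * h)))).
  { apply Rmult_le_compat_l; [lra|].
    pose proof (Hf x (1 / m) Hx Hxm); lra. }
  assert (Etangent : 1 / m * (1 - h * gam) + h * (1 / m * (gam - (m' - m) / (m * h)))
                     = 1 / m - (m' - m) / (m * m)) by (field; lra).
  pose proof (inv_tangent_le m m' Hm Hm'); lra.
Qed.

Lemma is_lim_seq_le_inv_p_infty (u v : nat -> R) :
  (forall n, 0 <= u n <= 1 / v n) -> is_lim_seq v p_infty -> is_lim_seq u 0.
Proof.
  intros Hbound Hv.
  apply is_lim_seq_le_le with (u := fun _ => 0) (w := fun n => 1 / v n);
    [exact Hbound | apply is_lim_seq_const |].
  apply is_lim_seq_ext with (u := fun n => / v n); [intro n; unfold Rdiv; ring|].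
  change (is_lim_seq (fun n => / v n) (Rbar_inv p_infty)).
  apply is_lim_seq_inv; [exact Hv | discriminate].
Qed.

Theorem theorem3
  (alpha : nat -> R -> R) (beta g h gamma mu : nat -> R)
  (Halpha_nonneg : forall n x, 0 <= x -> 0 <= alpha n x)
  (Halpha_mono : forall n, nondecr_on_nonneg (alpha n))
  (Halpha_lip : forall n, loc_lipschitz_on_nonneg (alpha n))
  (Hbeta : forall n, 0 <= beta n)
  (Hg : forall n, 0 <= g n)
  (Hh : forall n, 0 < h n)
  (Hhg : forall n, 0 < h n * gamma n /\ h n * gamma n < 1)
  (Hrec : forall n, (g (S n) - g n) / h n <= - gamma n * g n + alpha n (g n) + beta n)
  (Hmu : forall n, 0 < mu n)
  (Hmu_cond : forall n,
      alpha n (1 / mu n) + beta n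
      <= (1 / mu n) * (gamma n - (mu (S n) - mu n) / (mu n * h n)))
  (Hg0 : g 0%nat <= 1 / mu 0%nat) :
  (forall n, 0 <= g n /\ g n <= 1 / mu n) /\
  (is_lim_seq mu p_infty -> is_lim_seq g 0).
Proof.
  assert (Hupper : forall n, g n <= 1 / mu n).
  { induction n as [|n IH]; [exact Hg0|].
    apply (comparison_step (alpha n) (g n) (g (S n)) (h n) (gamma n) (beta n)
             (mu n) (mu (S n)));
      auto; apply Hhg. }
  assert (Hbound : forall n, 0 <= g n /\ g n <= 1 / mu n) by (split; auto).
  split; [exact Hbound|].
  exact (is_lim_seq_le_inv_p_infty g mu Hbound).
Qed.
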